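(* Let $\mu$ be a probability measure on $\mathbb{R}$ with finite support $V$ and let $c:V\to\mathbb{R}$ satisfy $c(v)\le v$ for all $v\in V$. Then there exist incentive compatible distributions $\nu_1,\dots,\nu_J$ and weights $(q_1,\dots,q_J)\in\Delta(\{1,\dots,J\})$ such that $\sum_j q_j\nu_j=\mu$ and $\sigma^*(c,\mu)\subset\sigma^*(c,\nu_j)$ for every $j$.
   Context: For a finitely supported probability $\nu$ on $V$ and $p\in\mathbb{R}$, $\pi(c,\nu,p)=\sum_{v\in\mathrm{Supp}(\nu),\,v\ge p}(p-c(v))\nu(\{v\})$ and $\sigma^*(c,\nu)=\arg\max_{p\in\mathbb{R}}\pi(c,\nu,p)$. A distribution $\nu$ on $V$ is an incentive compatible distribution (ICD) if $\pi(c,\nu,p)$ is the same nonnegative constant for all $p\in\mathrm{Supp}(\nu)$. *)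

From HB Require Import structures.
From mathcomp Require Import all_boot all_order all_algebra.
From mathcomp Require Import reals.
Set Implicit Arguments. Unset Strict Implicit. Unset Printing Implicit Defensive.
Import Order.TTheory GRing.Theory Num.Theory.
Local Open Scope ring_scope.

(* A finitely supported distribution is represented by its mass function
   nu : R -> R, nu v = nu({v}).  [V] is a finite (duplicate-free) list of reals. *)

Definition is_dist_on (R : realType) (V : seq R) (nu : R -> R) : Prop :=
  (forall v, 0 <= nu v) /\ (forall v, v \notin V -> nu v = 0) /\
  \sum_(v <- V) nu v = 1.

Definition supp (R : realType) (V : seq R) (nu : R -> R) (v : R) : bool :=
  (v \in V) && (0 < nu v).

Definition profit (R : realType) (V : seq R) (c : R -> R) (nu : R -> R) (p : R) : R :=
  \sum_(v <- V | supp V nu v && (p <= v)) (p - c v) * nu v.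

Definition sigma_star (R : realType) (V : seq R) (c : R -> R) (nu : R -> R) (p : R) : Prop :=
  forall p' : R, profit V c nu p' <= profit V c nu p.

Definition is_ICD (R : realType) (V : seq R) (c : R -> R) (nu : R -> R) : Prop :=
  is_dist_on V nu /\
  exists k : R, 0 <= k /\ forall p, supp V nu p -> profit V c nu p = k.

(* Induction on the size of the support of mu.  Let w_1 < ... < w_r be the
   support points of mu up to and including the first one with c w = w (all of
   them if there is none).  Solving the indifference conditions
   pi(w_i) = w_r - c w_r from the top down gives an ICD nu on {w_1, ..., w_r}.
   Its profit is maximal at every support point of mu: on {w_1, ..., w_r} by
   incentive compatibility, and above w_r because there both the profit of nu
   and, as c w_r = w_r, its maximum vanish.  Remove the largest multiple t nu
   with t nu <= mu: this kills a support point, and since t nu has constant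
   maximal profit on Supp mu, every optimal price for mu = (mu - t nu) + t nu is
   optimal for both summands.  Recurse on mu - t nu. *)

From HB Require Import structures.
From mathcomp Require Import all_boot all_order all_algebra.
From mathcomp Require Import reals.
From mathcomp Require Import ring lra.
Set Implicit Arguments. Unset Strict Implicit. Unset Printing Implicit Defensive.
Import Order.TTheory GRing.Theory Num.Theory.
Local Open Scope ring_scope.

Lemma seq_argmin (T : eqType) (d : Order.disp_t) (O : orderType d) (f : T -> O) (s : seq T) :
  s != [::] -> exists2 x, x \in s & forall y, y \in s -> (f x <= f y)%O.
Proof.
elim: s => [//|a [|b s] IH _]; first by exists a => [|y]; rewrite inE // => /eqP ->.
have [x xs Hx] := IH isT; case: (leP (f a) (f x)) => [ax|xa].
  exists a; first exact: mem_head.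
  by move=> y; rewrite inE => /predU1P [-> //|/Hx]; apply: le_trans.
exists x; first by rewrite inE xs orbT.
by move=> y; rewrite inE => /predU1P [->|/Hx //]; apply: ltW.
Qed.

Lemma split_at_first (T : Type) (P : pred T) (x : T) (s : seq T) :
  exists s1 s2, [/\ s = s1 ++ s2, all P (belast x s1) & s2 = [::] \/ ~~ P (last x s1)].
Proof.
elim: s x => [|y s IH] x; first by exists [::], [::]; split; try left.
have [Px|nPx] := boolP (P x); last by exists [::], (y :: s); split; try right.
have [s1 [s2 [-> Hs1 Hs2]]] := IH y.
by exists (y :: s1), s2; split => //=; rewrite Px.
Qed.

Lemma sum_supported (R : nmodType) (T : eqType) (f : T -> R) (S V : seq T) :
  uniq S -> uniq V -> {subset S <= V} -> (forall x, x \notin S -> f x = 0) ->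
  \sum_(v <- V) f v = \sum_(v <- S) f v.
Proof.
move=> uS uV SV f0; rewrite (bigID (mem S)) /= [X in _ + X]big1 ?addr0; last first.
  by move=> v /f0.
rewrite -big_filter; apply: perm_big; apply: uniq_perm; rewrite ?filter_uniq //.
by move=> v; rewrite mem_filter; case vS: (v \in S); rewrite ?(SV v vS).
Qed.

Lemma sub_count_lt (T : eqType) (a1 a2 : pred T) (s : seq T) x :
  subpred a1 a2 -> x \in s -> a2 x -> ~~ a1 x -> (count a1 s < count a2 s)%N.
Proof.
move=> a12 + a2x na1x; elim: s => //= y s IH; rewrite inE => /predU1P [<-|xs].
  by rewrite (negbTE na1x) a2x ltnS leq_add2l; apply: sub_count.
by rewrite -addnS leq_add ?IH //; case: (boolP (a1 y)) => // /a12 ->.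
Qed.

Section Gain.
Variables (R : realType) (c : R -> R).

(* [profit] without the restriction to the support, hence linear in [m]. *)
Definition gain (V : seq R) (m : R -> R) (p : R) : R :=
  \sum_(v <- V | p <= v) (p - c v) * m v.

Lemma gainB V m nu t p :
  gain V (fun v => m v - t * nu v) p = gain V m p - t * gain V nu p.
Proof. by rewrite /gain mulr_sumr -sumrB; apply: eq_bigr => v _; ring. Qed.

Lemma gainZ V m a p : gain V (fun v => a * m v) p = a * gain V m p.
Proof. by rewrite /gain mulr_sumr; apply: eq_bigr => v _; ring. Qed.

Variable V : seq R.

Lemma notin_supp (m : R -> R) v :
  (forall v, 0 <= m v) -> v \in V -> ~~ supp V m v -> m v = 0.
Proof. by move=> m0 vV; rewrite /supp vV -leNgt => mv; apply/le_anti; rewrite mv m0. Qed.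

Lemma supp_subr (m n : R -> R) v : (forall v, 0 <= n v) ->
  supp V (fun v => m v - n v) v -> supp V m v.
Proof. by move=> n0 /andP [vV mnv]; rewrite /supp vV (lt_le_trans mnv) // gerBl. Qed.

Lemma profit_gain m p : (forall v, 0 <= m v) -> profit V c m p = gain V m p.
Proof.
move=> m0; rewrite /profit /gain [RHS](bigID (supp V m)) /= [X in _ + X]big_seq_cond.
rewrite [X in _ + X]big1 ?addr0; last first.
  by move=> v /and3P [vV _ /(notin_supp m0 vV) ->]; rewrite mulr0.
by apply: eq_bigl => v; rewrite andbC.
Qed.

Lemma sigma_star_gain m p : (forall v, 0 <= m v) ->
  sigma_star V c m p <-> forall p', gain V m p' <= gain V m p.
Proof. by move=> m0; split => H p'; have := H p'; rewrite !profit_gain. Qed.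

Lemma gain_le_support m p : (forall v, 0 <= m v) ->
  gain V m p = 0 \/ exists2 w, supp V m w & gain V m p <= gain V m w.
Proof.
move=> m0; have [|no_supp] := boolP (has (fun v => supp V m v && (p <= v)) V); last first.
  left; rewrite /gain big_seq_cond big1 // => v /andP [vV pv].
  rewrite (notin_supp m0 vV) ?mulr0 //; apply: contra no_supp => mv.
  by apply/hasP; exists v; rewrite ?mv.
rewrite has_filter => /(seq_argmin id) [w].
rewrite mem_filter => /andP [/andP [w_supp pw] wV] w_min.
right; exists w => //; rewrite /gain big_mkcond [X in _ <= X]big_mkcond /= big_seq.
rewrite [X in _ <= X]big_seq; apply: ler_sum => v vV.
have [wv|vw] := leP w v.
  by rewrite (le_trans pw wv) ler_wpM2r ?lerB.
case: ifP => // pv; case: (boolP (supp V m v)) => [mv|/(notin_supp m0 vV) ->].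
  by have := w_min v; rewrite mem_filter mv pv vV leNgt vw => /(_ isT).
by rewrite mulr0.
Qed.

Hypothesis c_le : {in V, forall v, c v <= v}.

Lemma gain_top_ge0 m : (forall v, 0 <= m v) -> has (supp V m) V ->
  exists2 w, supp V m w & 0 <= gain V m w.
Proof.
move=> m0; rewrite has_filter => /(seq_argmin (fun x => - x)) [w].
rewrite mem_filter => /andP [w_supp wV] w_max; exists w => //.
rewrite /gain big_seq_cond sumr_ge0 // => v /andP [vV wv].
case: (boolP (supp V m v)) => [mv|/(notin_supp m0 vV) ->]; last by rewrite mulr0.
have vw : v = w by apply/le_anti; rewrite wv -lerN2 w_max // mem_filter mv.
by rewrite vw mulr_ge0 ?subr_ge0 ?c_le.
Qed.

Lemma gain_max_on_support m q : (forall v, 0 <= m v) ->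
  (forall w, supp V m w -> gain V m w <= gain V m q) ->
  forall p, gain V m p <= gain V m q.
Proof.
move=> m0 q_max p.
have [->|[w mw /le_trans -> //]] := gain_le_support p m0; last exact: q_max.
have [->//|[w mw _]] := gain_le_support q m0.
have m_supp : has (supp V m) V by apply/hasP; exists w => //; case/andP: mw.
by have [w' mw' /le_trans -> //] := gain_top_ge0 m0 m_supp; apply: q_max.
Qed.

Lemma ICD_sigma_star nu p : is_ICD V c nu -> supp V nu p -> sigma_star V c nu p.
Proof.
move=> [[nu0 _] [k [_ nu_k]]] nup; apply/sigma_star_gain => // p'.
apply: gain_max_on_support => // w nuw.
by rewrite -!profit_gain // !nu_k.
Qed.

End Gain.

Arguments sigma_star_gain {R c V m p}.

Section IcdWeight.
Variables (R : realType) (c : R -> R).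

(* Unnormalised weights on an increasing list: the top point gets weight 1, and
   a lower point w with successor w' gets the weight f w solving
   (w - c w) * f w = (w' - w) * (mass above w), which is exactly what makes the
   profits at w and at w' equal. *)
Fixpoint icd_weight (s : seq R) : R -> R :=
  if s is w :: s' then
    if s' is w' :: _ then
      let f := icd_weight s' in
      fun x => if x == w then (w' - w) * (\sum_(v <- s') f v) / (w - c w) else f x
    else fun x => (x == w)%:R
  else fun _ => 0.

Lemma icd_weight_spec w s : path <%R w s -> {in belast w s, forall x, c x < x} ->
  [/\ {in w :: s, forall x, 0 < icd_weight (w :: s) x},
      forall x, x \notin w :: s -> icd_weight (w :: s) x = 0,
      icd_weight (w :: s) (last w s) = 1 &
      {in w :: s, forall x,
        gain c (w :: s) (icd_weight (w :: s)) x = last w s - c (last w s)}].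
Proof.
elim: s w => [|w' s IH] w.
  move=> _ _; split => [x|x|/=|x].
  - by rewrite inE => /eqP ->; rewrite /= eqxx ltr01.
  - by rewrite inE /= => /negbTE ->.
  - by rewrite eqxx.
  - by rewrite inE => /eqP ->; rewrite /gain big_cons big_nil lexx /= eqxx mulr1 addr0.
move=> /andP [ww' path_w'] c_lt.
have c_lt' : {in belast w' s, forall x, c x < x}.
  by move=> x xs; apply: c_lt; rewrite /= inE xs orbT.
have [f_pos f0 f_last f_gain] := IH w' path_w' c_lt'.
set f := icd_weight (w' :: s) in f_pos f0 f_last f_gain *.
have w'_le v : v \in w' :: s -> w' <= v.
  rewrite in_cons => /predU1P [-> //|vs].
  by rewrite ltW //; apply: (allP (order_path_min lt_trans path_w')).
have w_lt v : v \in w' :: s -> w < v by move/w'_le; apply: lt_le_trans.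
set fw := (w' - w) * (\sum_(v <- w' :: s) f v) / (w - c w).
have -> : icd_weight [:: w, w' & s] = fun x => if x == w then fw else f x by [].
have fw_pos : 0 < fw.
  rewrite !divr_gt0 ?mulr_gt0 ?subr_gt0 ?c_lt ?mem_head //.
  rewrite big_cons ltr_wpDr ?f_pos ?mem_head // big_seq sumr_ge0 // => v vs.
  by rewrite ltW ?f_pos // inE vs orbT.
have fE v : v \in w' :: s -> (if v == w then fw else f v) = f v.
  by move/w_lt/gt_eqF ->.
have gain_tail x : \sum_(v <- w' :: s | x <= v) (x - c v) * (if v == w then fw else f v)
    = gain c (w' :: s) f x.
  by rewrite /gain big_seq_cond [RHS]big_seq_cond; apply: eq_bigr => v /andP [/fE ->].
have gain_all x : {in w' :: s, forall v, x <= v} ->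
    gain c (w' :: s) f x = \sum_(v <- w' :: s) (x - c v) * f v.
  move=> x_le; rewrite /gain big_seq_cond [RHS]big_seq; apply: eq_bigl => v.
  by case: (boolP (v \in _)) => //= /x_le ->.
split.
- move=> x; rewrite in_cons => /predU1P [->|xs]; first by rewrite eqxx.
  by rewrite fE ?f_pos.
- by move=> x; rewrite in_cons negb_or => /andP [/negbTE -> /f0].
- by rewrite /= fE ?mem_last.
move=> x; rewrite in_cons /gain big_cons => /predU1P [->|xs]; last first.
  by rewrite leNgt w_lt //= gain_tail f_gain.
rewrite lexx eqxx gain_tail gain_all => [|v /w_lt /ltW //].
rewrite -(f_gain w' (mem_head _ _)) gain_all //.
have cw_neq0 : w - c w != 0 by rewrite subr_eq0 gt_eqF ?c_lt ?mem_head.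
rewrite mulrC /fw divfK // mulr_sumr -big_split /=; apply: eq_bigr => v _; ring.
Qed.
End IcdWeight.

Section Decomposition.
Variables (R : realType) (c : R -> R) (V : seq R).
Hypotheses (V_uniq : uniq V) (c_le : {in V, forall v, c v <= v}).

Lemma exists_icd_on_path w s : path <%R w s -> {subset w :: s <= V} ->
  {in belast w s, forall x, c x < x} ->
  exists nu, [/\ is_ICD V c nu, forall x, (0 < nu x) = (x \in w :: s) &
    {in w :: s, forall x, gain c V nu x = (last w s - c (last w s)) * nu (last w s)}].
Proof.
move=> w_path sV c_lt; have [f_pos f0 f_last f_gain] := icd_weight_spec w_path c_lt.
set S := w :: s in sV f_pos f0 f_gain *; set f := icd_weight c S in f_pos f0 f_last f_gain.
have S_uniq : uniq S.
  by move: w_path; rewrite -[path _ _ _]/(sorted <%R S) lt_sorted_uniq_le => /andP [].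
pose Z := \sum_(v <- S) f v.
have Z_gt0 : 0 < Z.
  rewrite /Z big_cons ltr_wpDr ?f_pos ?mem_head // big_seq sumr_ge0 // => v vs.
  by rewrite ltW ?f_pos // inE vs orbT.
pose nu x := Z^-1 * f x.
have nu_supp x : (0 < nu x) = (x \in S).
  by case: (boolP (x \in S)) => [/f_pos|/f0] fx; rewrite /nu ?fx ?mulr0 ?ltxx ?mulr_gt0 ?invr_gt0.
have nu_ge0 x : 0 <= nu x.
  by case: (boolP (x \in S)) => [|/f0 fx]; [rewrite -nu_supp => /ltW|rewrite /nu fx mulr0].
have nu0 x : x \notin S -> nu x = 0 by move/f0 => fx; rewrite /nu fx mulr0.
have sum_S (g : R -> R) :
    (forall x, x \notin S -> g x = 0) -> \sum_(v <- V) g v = \sum_(v <- S) g v.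
  exact: sum_supported.
have gain_nu :
    {in S, forall x, gain c V nu x = (last w s - c (last w s)) * nu (last w s)}.
  move=> x xS; rewrite /gain big_mkcond sum_S -?big_mkcond => [|v /nu0 ->]; last first.
    by rewrite mulr0; case: ifP.
  by rewrite -/(gain c S nu x) gainZ f_gain // /nu f_last mulr1 mulrC.
exists nu; split => //; split.
- split => //; split; first by move=> v vV; apply: nu0; apply: contra vV; apply: sV.
  by rewrite sum_S // -mulr_sumr mulVf ?gt_eqF.
- exists ((last w s - c (last w s)) * nu (last w s)); split.
    by rewrite mulr_ge0 // subr_ge0 c_le // sV // mem_last.
  by move=> p /andP [_]; rewrite nu_supp => pS; rewrite profit_gain // gain_nu.
Qed.

Lemma support_prefix m : has (supp V m) V ->
  exists w s, [/\ path <%R w s, {subset w :: s <= supp V m},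
    {in belast w s, forall x, c x < x} &
    forall u, supp V m u -> u \notin w :: s ->
      c (last w s) = last w s /\ {in w :: s, forall x, x < u}].
Proof.
move=> m_supp; pose ss := sort <=%R (filter (supp V m) V).
have ss_sorted : sorted <%R ss by rewrite sort_lt_sorted filter_uniq.
have mem_ss x : (x \in ss) = supp V m x.
  by rewrite mem_sort mem_filter andb_idr // => /andP [].
case Ess: ss ss_sorted mem_ss => [|w s0] ss_sorted mem_ss.
  by move/hasP: m_supp => [x _ mx]; move: (mem_ss x); rewrite mx.
have [s [s2 [Es0 c_lt top]]] := split_at_first (fun x => c x < x) w s0.
rewrite Es0 -cat_cons in ss_sorted mem_ss.
exists w, s; split => //.
- by move: ss_sorted; rewrite /= cat_path => /andP [].
- by move=> x xs; have := mem_ss x; rewrite mem_cat xs.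
- exact/allP.
move=> u mu u_notin.
have us2 : u \in s2 by move: mu; rewrite -mem_ss mem_cat (negbTE u_notin).
split.
  case: top => [s2_nil|/negP c_top]; first by rewrite s2_nil in us2.
  have /andP [topV _] : supp V m (last w s) by rewrite -mem_ss mem_cat mem_last.
  by apply/le_anti; rewrite c_le // leNgt; apply/negP.
move: ss_sorted; rewrite sorted_pairwise; last exact: lt_trans.
by rewrite pairwise_cat => /and3P [/allrelP lt_s2 _ _] x xs; apply: lt_s2.
Qed.

Lemma sigma_star_peel m nu t : 0 < t -> (forall v, 0 <= nu v) ->
  (forall v, t * nu v <= m v) -> has (supp V m) V ->
  {in supp V m, forall u, sigma_star V c nu u} ->
  forall p, sigma_star V c m p ->
    sigma_star V c nu p /\ sigma_star V c (fun v => m v - t * nu v) p.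
Proof.
move=> t_gt0 nu0 tnu_le m_supp nu_max p.
set m' := fun v => m v - t * nu v.
have tnu0 v : 0 <= t * nu v by rewrite mulr_ge0 ?(ltW t_gt0).
have m'0 v : 0 <= m' v by rewrite subr_ge0.
have m0 v : 0 <= m v by apply: le_trans (tnu_le v).
move: m_supp; rewrite has_filter => /(seq_argmin (fun x => - gain c V m x)) [ps].
rewrite mem_filter => /andP [m_ps _] ps_max.
have nu_ps p' : gain c V nu p' <= gain c V nu ps.
  by have /(sigma_star_gain nu0) := nu_max ps m_ps.
have nu_const u : supp V m u -> gain c V nu u = gain c V nu ps.
  by move=> mu; apply/le_anti; rewrite nu_ps; have /(sigma_star_gain nu0) -> := nu_max u mu.
have m'_ps p' : gain c V m' p' <= gain c V m' ps.
  apply: gain_max_on_support => // y m'y; have my := supp_subr tnu0 m'y.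
  rewrite !gainB nu_const // lerD2r -lerN2; apply: ps_max.
  by rewrite mem_filter my; case/andP: my.
move=> /(sigma_star_gain m0) p_max.
have gain_m x : gain c V m x = gain c V m' x + t * gain c V nu x by rewrite gainB subrK.
have := p_max ps; rewrite !gain_m => ps_le_p.
have := m'_ps p; have := nu_ps p; rewrite -(ler_pM2l t_gt0) => nu_p m'_p.
have m'_eq : gain c V m' p = gain c V m' ps by lra.
have /mulfI nu_eq : t * gain c V nu p = t * gain c V nu ps by lra.
split; apply/sigma_star_gain => // p'; first by rewrite nu_eq ?gt_eqF.
by rewrite m'_eq.
Qed.

Lemma peel_icd (m : R -> R) : (forall v, 0 <= m v) -> has (supp V m) V ->
  exists nu t, [/\ 0 < t, is_ICD V c nu, forall v, t * nu v <= m v,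
    (count (supp V (fun v => (m v - t * nu v)%R)) V < count (supp V m) V)%N &
    {in supp V m, forall u, sigma_star V c nu u}].
Proof.
move=> m0 m_supp; have [w [s [w_path s_supp c_lt beyond]]] := support_prefix m_supp.
have sV : {subset w :: s <= V} by move=> x /s_supp /andP [].
have [nu [nu_icd nu_supp nu_gain]] := exists_icd_on_path w_path sV c_lt.
have nu0 : forall v, 0 <= nu v by case: nu_icd => [[]].
have nu_eq0 v : v \notin w :: s -> nu v = 0.
  by rewrite -nu_supp => nu_v; apply/le_anti; rewrite nu0 leNgt nu_v.
have nu_max : {in supp V m, forall u, sigma_star V c nu u}.
  move=> u mu; have [uS|u_notin] := boolP (u \in w :: s).
    by apply: ICD_sigma_star => //; rewrite /supp sV ?nu_supp.
  have [c_top lt_u] := beyond u mu u_notin.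
  have /(sigma_star_gain nu0) w_max : sigma_star V c nu w.
    by apply: ICD_sigma_star; rewrite /supp ?sV ?nu_supp ?mem_head.
  apply/(sigma_star_gain nu0) => p'; apply: le_trans (w_max p') _.
  rewrite nu_gain ?mem_head // c_top subrr mul0r /gain big_seq_cond sumr_ge0 // => v /andP [_ uv].
  by rewrite nu_eq0 ?mulr0 //; apply: contraL uv => /lt_u; rewrite -ltNge.
have [x0 x0S x0_min] := @seq_argmin _ _ _ (fun x => m x / nu x) (w :: s) isT.
pose t := m x0 / nu x0.
have nu_x0 : 0 < nu x0 by rewrite nu_supp.
have m_x0 : supp V m x0 := s_supp x0 x0S.
have t_gt0 : 0 < t by rewrite divr_gt0 //; case/andP: m_x0.
have tnu_le v : t * nu v <= m v.
  have [vS|/nu_eq0 ->] := boolP (v \in w :: s); last by rewrite mulr0.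
  by rewrite -ler_pdivlMr ?nu_supp //; apply: x0_min.
exists nu, t; split => //; apply: (sub_count_lt (x := x0) _ (sV _ x0S) m_x0).
- by move=> v; apply: supp_subr => v'; rewrite mulr_ge0 ?(ltW t_gt0).
- by rewrite /supp /= /t divfK ?gt_eqF // subrr ltxx andbF.
Qed.

Definition icd_decomposable (m : R -> R) : Prop :=
  exists (J : nat) (q : 'I_J -> R) (nu : 'I_J -> R -> R),
    (forall j, 0 <= q j) /\ \sum_(j < J) q j = \sum_(v <- V) m v /\
    (forall j, is_ICD V c (nu j)) /\
    (forall v, \sum_(j < J) q j * nu j v = m v) /\
    (forall j p, sigma_star V c m p -> sigma_star V c (nu j) p).

Lemma icd_decomposable0 m : (forall v, m v = 0) -> icd_decomposable m.
Proof.
move=> m_eq0; exists 0%N, (fun _ => 0), (fun _ _ => 0).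
split; first by case.
split; first by rewrite big_ord0 big1.
split; first by case.
by split => [v|[]//]; rewrite big_ord0.
Qed.

Lemma icd_decomposable_cons m nu t : 0 <= t -> is_ICD V c nu ->
  icd_decomposable (fun v => m v - t * nu v) ->
  (forall p, sigma_star V c m p ->
     sigma_star V c nu p /\ sigma_star V c (fun v => m v - t * nu v) p) ->
  icd_decomposable m.
Proof.
move=> t0 nu_icd [J [q [nus [q0 [q_sum [nus_icd [q_nus nus_max]]]]]]] m_max.
have [[_ [_ nu_sum]] _] := nu_icd.
exists J.+1, (fun j => if unlift ord0 j is Some j' then q j' else t),
  (fun j => if unlift ord0 j is Some j' then nus j' else nu).
split; first by move=> j; case: (unliftP ord0 j).
split.
  rewrite big_ord_recl unlift_none; under eq_bigr do rewrite liftK.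
  by rewrite q_sum sumrB -mulr_sumr nu_sum mulr1 addrC subrK.
split; first by move=> j; case: (unliftP ord0 j).
split.
  move=> v; rewrite big_ord_recl unlift_none; under eq_bigr do rewrite liftK.
  by rewrite q_nus addrC subrK.
move=> j p /m_max [nu_p m'_p].
by case: (unliftP ord0 j) => [j' _|_] //; apply: nus_max.
Qed.

Lemma icd_decomposable_all m :
  (forall v, 0 <= m v) -> (forall v, v \notin V -> m v = 0) -> icd_decomposable m.
Proof.
move: {2}(count _ _).+1 (ltnSn (count (supp V m) V)) => n.
elim: n m => [//|n IH] m; rewrite ltnS => count_le m0 m_off.
have [m_supp|no_supp] := boolP (has (supp V m) V); last first.
  apply: icd_decomposable0 => v; have [vV|/m_off //] := boolP (v \in V).
  by apply: (notin_supp m0 vV); apply: contra no_supp => mv; apply/hasP; exists v.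
have [nu [t [t_gt0 nu_icd tnu_le count_lt nu_max]]] := peel_icd m0 m_supp.
have [[nu0 [nu_off _]] _] := nu_icd.
apply: (icd_decomposable_cons (ltW t_gt0) nu_icd); last exact: sigma_star_peel.
apply: IH => [|v|v /[dup] /m_off -> /nu_off ->]; last by rewrite mulr0 subrr.
- exact: leq_trans count_lt count_le.
- by rewrite subr_ge0.
Qed.

End Decomposition.

Theorem lemmaD1 (R : realType) (V : seq R) (mu : R -> R) (c : R -> R) :
  uniq V ->
  is_dist_on V mu ->
  (forall v, v \in V -> 0 < mu v) ->
  (forall v, v \in V -> c v <= v) ->
  exists (J : nat) (q : 'I_J -> R) (nu : 'I_J -> R -> R),
    (forall j, 0 <= q j) /\ \sum_(j < J) q j = 1 /\
    (forall j, is_ICD V c (nu j)) /\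
    (forall v, \sum_(j < J) q j * nu j v = mu v) /\
    (forall j p, sigma_star V c mu p -> sigma_star V c (nu j) p).
Proof.
move=> V_uniq [mu0 [mu_off mu_sum]] _ c_le.
have [J [q [nu [q0 [q_sum nu_props]]]]] := icd_decomposable_all V_uniq c_le mu0 mu_off.
by exists J, q, nu; rewrite q_sum mu_sum.
Qed.
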